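(* Let $M \geq 1$ and let $f \colon (\mathbb{W},d_{\mathrm{par}}) \to (\mathbb{H},d)$ be an $M$-bilipschitz map. Then for every $\epsilon \in (0,1]$ there exist $C = C(\epsilon,M) \geq 10$ and $\delta = \delta(C,\epsilon,M) > 0$ such that for all $w \in \mathbb{W}$ and $r > 0$: $$\rho_{f}(B(w,Cr)) < \delta \implies \beta_{f}(B(w,r)) < \epsilon.$$
   Context: $\mathbb{H}$ is $\mathbb{R}^{3}$ with group law $(x_{1},y_{1},t_{1}) \cdot (x_{2},y_{2},t_{2}) = (x_{1}+x_{2},y_{1}+y_{2},t_{1}+t_{2}+\tfrac{1}{2}(x_{1}y_{2}-x_{2}y_{1}))$, metric $d(p,q) = \|q^{-1}\cdot p\|$ with $\|(x,y,t)\| = \max\{\sqrt{x^{2}+y^{2}},\sqrt{|t|}\}$, and $N(E,\delta) = \{p : \operatorname{dist}(p,E) \leq \delta\}$. A horizontal line in $\mathbb{H}$ is a set $p \cdot \{(sa,sb,0) : s \in \mathbb{R}\}$ with $p \in \mathbb{H}$, $(a,b) \neq 0$. A vertical plane is a set $\{(x,y,t) : (x,y) \in \lambda, t \in \mathbb{R}\}$ for an affine line $\lambda \subset \mathbb{R}^{2}$. $\mathbb{W}$ is $\mathbb{R}^{2}$ with $d_{\mathrm{par}}((y,t),(\xi,\tau)) = \max\{|y-\xi|,|t-\tau|^{1/2}\}$; horizontal lines in $\mathbb{W}$ are the sets $\mathbb{R} \times \{t\}$; $B(w,r)$ is the closed $d_{\mathrm{par}}$-ball. The ruler coefficient $\rho_{f}(B(w,r))$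 is the infimum of $\rho > 0$ such that for every horizontal line $\ell \subset \mathbb{W}$ there is a horizontal line $L \subset \mathbb{H}$ with $f(\ell \cap B(w,r)) \subset N(L,\rho r)$. For a vertical plane $\mathbb{V}$, $\beta_{f}(\mathbb{V};B(w,r))$ is the infimum of $\epsilon > 0$ such that for every horizontal line $\ell \subset \mathbb{W}$ there is a horizontal line $L \subset \mathbb{V}$ with $f(\ell \cap B(w,r)) \subset N(L,\epsilon r)$; $\beta_{f}(B(w,r)) := \inf_{\mathbb{V}} \beta_{f}(\mathbb{V};B(w,r))$ over all vertical planes. *)

From HB Require Import structures.
From mathcomp Require Import all_boot all_order all_algebra.
From mathcomp Require Import all_classical all_reals.
From mathcomp Require Import ereal.
Set Implicit Arguments. Unset Strict Implicit. Unset Printing Implicit Defensive.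
Import Order.TTheory GRing.Theory Num.Theory.
Local Open Scope classical_set_scope.
Local Open Scope ring_scope.

Section Heis.
Variable R : realType.

Definition Hpt := (R * R * R)%type.
Definition Wpt := (R * R)%type.

Definition hx (p : Hpt) : R := p.1.1.
Definition hy (p : Hpt) : R := p.1.2.
Definition ht (p : Hpt) : R := p.2.

Definition hmul (p q : Hpt) : Hpt :=
  (hx p + hx q, hy p + hy q,
   ht p + ht q + 2^-1 * (hx p * hy q - hx q * hy p)).

Definition hinv (p : Hpt) : Hpt := (- hx p, - hy p, - ht p).

Definition hnorm (p : Hpt) : R :=
  Num.max (Num.sqrt (hx p ^+ 2 + hy p ^+ 2)) (Num.sqrt `|ht p|).

Definition hdist (p q : Hpt) : R := hnorm (hmul (hinv q) p).

Definition hdist_set (p : Hpt) (E : set Hpt) : R := inf [set hdist p e | e in E].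

Definition nbhd (E : set Hpt) (delta : R) : set Hpt :=
  [set p | hdist_set p E <= delta].

Definition horiz_line_H (L : set Hpt) : Prop :=
  exists (p : Hpt) (a b : R), (a, b) != (0, 0) /\
    L = [set q | exists s : R, q = hmul p (s * a, s * b, 0)].

Definition affine_line (lam : set (R * R)) : Prop :=
  exists (x0 y0 u v : R), (u, v) != (0, 0) /\
    lam = [set z | exists s : R, z = (x0 + s * u, y0 + s * v)].

Definition vertical_plane (V : set Hpt) : Prop :=
  exists lam, affine_line lam /\ V = [set p | lam (hx p, hy p)].

Definition dpar (v w : Wpt) : R :=
  Num.max `|v.1 - w.1| (Num.sqrt `|v.2 - w.2|).

Definition Wball (w : Wpt) (r : R) : set Wpt := [set v | dpar w v <= r].

Definition horiz_line_W (t : R) : set Wpt := [set v | v.2 = t].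

Definition bilipschitz (M : R) (f : Wpt -> Hpt) : Prop :=
  forall v w : Wpt, M^-1 * dpar v w <= hdist (f v) (f w) <= M * dpar v w.

Definition ruler_coeff (f : Wpt -> Hpt) (w : Wpt) (r : R) : \bar R :=
  ereal_inf [set (rho%:E)%E | rho in
    [set rho : R | 0 < rho /\
       forall t : R, exists L : set Hpt, horiz_line_H L /\
         f @` (horiz_line_W t `&` Wball w r) `<=` nbhd L (rho * r)]].

Definition beta_plane (f : Wpt -> Hpt) (V : set Hpt) (w : Wpt) (r : R) : \bar R :=
  ereal_inf [set (eps%:E)%E | eps in
    [set eps : R | 0 < eps /\
       forall t : R, exists L : set Hpt, horiz_line_H L /\ L `<=` V /\
         f @` (horiz_line_W t `&` Wball w r) `<=` nbhd L (eps * r)]].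

Definition beta_coeff (f : Wpt -> Hpt) (w : Wpt) (r : R) : \bar R :=
  ereal_inf [set beta_plane f V w r | V in vertical_plane].

End Heis.

(* Move the horizontal line fitting the slice [t = t0] of [f (B (w, C r))] onto the
   x-axis by a left translation and a rotation. For [|t - t0| <= r^2] the slice [t] stays
   within [M r] of the slice [t0], so the line fitting it passes within [2 M r] of the
   x-axis at the images of [y0 - C r], [y0], [y0 + C r], whose line parameters are about
   [C r / M] apart by the lower bilipschitz bound. For [C] large against [M^4 / eps^2]
   this forces that line to be nearly parallel to the x-axis and to pass close to it, so
   on [B (w, r)] the slice [t] lies near the horizontal line [{(s, 0, c)}] for a suitable
   height [c]: all these lines lie in one vertical plane. *)

From HB Require Import structures.
From mathcomp Require Import all_boot all_order all_algebra.
From mathcomp Require Import all_classical all_reals.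
From mathcomp Require Import ereal.
From mathcomp Require Import ring lra.
Import Order.TTheory GRing.Theory Num.Theory.
Local Open Scope ring_scope.

Section HeisenbergDistance.
Context {R : realType}.
Implicit Types (P Q S : Hpt R) (rho : R).

Lemma sqrtr_le_sqr (a rho : R) : 0 <= rho -> (Num.sqrt a <= rho) = (a <= rho ^+ 2).
Proof.
by move=> rho0; rewrite -{1}(ger0_norm rho0) -sqrtr_sqr ler_sqrt // sqr_ge0.
Qed.

Lemma abs_le_of_sqr (u c : R) : 0 <= c -> u ^+ 2 <= c ^+ 2 -> `|u| <= c.
Proof. by move=> c0; rewrite -real_normK ?num_real // ler_sqr ?nnegrE. Qed.

Lemma hnorm_ge0 P : 0 <= hnorm P.
Proof. by rewrite /hnorm le_max sqrtr_ge0. Qed.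

Lemma hnorm_le P rho : 0 <= rho ->
  (hnorm P <= rho) <-> (hx P ^+ 2 + hy P ^+ 2 <= rho ^+ 2 /\ `|ht P| <= rho ^+ 2).
Proof. by move=> rho0; rewrite /hnorm ge_max !sqrtr_le_sqr //; split => [/andP|[-> ->]]. Qed.

(* Both bounds follow from Lagrange's identity
   [(x1 x2 + y1 y2)^2 + (x1 y2 - x2 y1)^2 = (x1^2 + y1^2) (x2^2 + y2^2)]. *)
Lemma lagrange_le {x1 y1 x2 y2 a b : R} : 0 <= a -> 0 <= b ->
  x1 ^+ 2 + y1 ^+ 2 <= a ^+ 2 -> x2 ^+ 2 + y2 ^+ 2 <= b ^+ 2 ->
  `|x1 * x2 + y1 * y2| <= a * b /\ `|x1 * y2 - x2 * y1| <= a * b.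
Proof.
move=> a0 b0 h1 h2.
have prod_le : (x1 ^+ 2 + y1 ^+ 2) * (x2 ^+ 2 + y2 ^+ 2) <= (a * b) ^+ 2.
  by rewrite exprMn ler_pM // addr_ge0 // sqr_ge0.
have ab0 : 0 <= a * b by rewrite mulr_ge0.
split; apply: abs_le_of_sqr => //; apply: le_trans prod_le.
  by have := sqr_ge0 (x1 * y2 - x2 * y1); lra.
by have := sqr_ge0 (x1 * x2 + y1 * y2); lra.
Qed.

Lemma hnorm_mul_le P Q : hnorm (hmul P Q) <= hnorm P + hnorm Q.
Proof.
have [hP1 hP2] := (hnorm_le _ _ (hnorm_ge0 P)).1 (lexx _).
have [hQ1 hQ2] := (hnorm_le _ _ (hnorm_ge0 Q)).1 (lexx _).
move: (hnorm_ge0 P) (hnorm_ge0 Q) hP1 hP2 hQ1 hQ2.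
set a := hnorm P; set b := hnorm Q => a0 b0; clearbody a b.
case: P => [[x1 y1] t1]; case: Q => [[x2 y2] t2].
rewrite /hx /hy /ht /= => hP1 hP2 hQ1 hQ2.
have [inner cross] := lagrange_le a0 b0 hP1 hQ1.
apply/hnorm_le; rewrite /hmul /hx /hy /ht /= ?addr_ge0 //; split.
  by have := ler_norm (x1 * x2 + y1 * y2); lra.
have := ler_normD (t1 + t2) (2^-1 * (x1 * y2 - x2 * y1)).
rewrite normrM ger0_norm ?invr_ge0 //.
have := ler_normD t1 t2; have := normr_ge0 (x1 * y2 - x2 * y1).
have := mulr_ge0 a0 b0; lra.
Qed.

Definition ht_diff P Q := ht P - ht Q - (hx Q * hy P - hx P * hy Q) / 2.

Lemma hdist_le P Q rho : 0 <= rho ->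
  (hdist P Q <= rho) <->
  ((hx P - hx Q) ^+ 2 + (hy P - hy Q) ^+ 2 <= rho ^+ 2 /\ `|ht_diff P Q| <= rho ^+ 2).
Proof.
move=> rho0; rewrite /hdist hnorm_le //.
suff -> : hmul (hinv Q) P = (hx P - hx Q, hy P - hy Q, ht_diff P Q) by [].
by rewrite /hmul /hinv /ht_diff /hx /hy /ht /=; congr (_, _, _); ring.
Qed.

Lemma hdist_ge0 P Q : 0 <= hdist P Q.
Proof. exact: hnorm_ge0. Qed.

Lemma hdist_triangle P Q S : hdist P S <= hdist P Q + hdist Q S.
Proof.
rewrite /hdist addrC.
suff -> : hmul (hinv S) P = hmul (hmul (hinv S) Q) (hmul (hinv Q) P).
  exact: hnorm_mul_le.
case: P Q S => [[? ?] ?] [[? ?] ?] [[? ?] ?].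
by rewrite /hmul /hinv /hx /hy /ht /=; congr (_, _, _); ring.
Qed.

Lemma hdist_sym P Q : hdist P Q = hdist Q P.
Proof.
case: P Q => [[x1 y1] t1] [[x2 y2] t2].
rewrite /hdist /hnorm /hmul /hinv /hx /hy /ht /=.
by congr (Num.max (Num.sqrt _) (Num.sqrt _)); [ring | rewrite -normrN; congr `|_|; ring].
Qed.

End HeisenbergDistance.

Section Isometries.
Context {R : realType}.
Implicit Types (P Q p q : Hpt R) (a b s c : R).

Definition hrot a b P : Hpt R := (a * hx P + b * hy P, - b * hx P + a * hy P, ht P).

Definition frame p a b P := hrot a b (hmul (hinv p) P).

Definition hline q a b s : Hpt R := hmul q (s * a, s * b, 0).

Context {a b : R}.
Hypothesis ab1 : a ^+ 2 + b ^+ 2 = 1.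

Lemma hrot_mul P Q : hrot a b (hmul P Q) = hmul (hrot a b P) (hrot a b Q).
Proof.
case: P Q => [[x1 y1] t1] [[x2 y2] t2]; rewrite /hrot /hmul /hx /hy /ht /=.
congr (_, _, _); [ring | ring |].
by rewrite -[in LHS](mul1r (x1 * y2 - x2 * y1)) -ab1; ring.
Qed.

Lemma hnorm_hrot P : hnorm (hrot a b P) = hnorm P.
Proof.
rewrite /hnorm /hrot /hx /hy /ht /=; congr (Num.max (Num.sqrt _) _).
by rewrite -[RHS]mul1r -ab1; ring.
Qed.

Lemma hdist_frame p P Q : hdist (frame p a b P) (frame p a b Q) = hdist P Q.
Proof.
have hrot_inv S : hrot a b (hinv S) = hinv (hrot a b S).
  by rewrite /hrot /hinv /hx /hy /ht /=; congr (_, _, _); ring.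
rewrite /hdist /frame -hrot_inv -hrot_mul hnorm_hrot; congr hnorm.
case: P Q p => [[? ?] ?] [[? ?] ?] [[? ?] ?].
by rewrite /hmul /hinv /hx /hy /ht /=; congr (_, _, _); ring.
Qed.

Lemma frame_hline p q a' b' s :
  frame p a b (hline q a' b' s) = hline (frame p a b q) (a * a' + b * b') (- b * a' + a * b') s.
Proof.
rewrite /hline.
have -> : (s * (a * a' + b * b'), s * (- b * a' + a * b'), 0) = hrot a b (s * a', s * b', 0).
  by rewrite /hrot /hx /hy /ht /=; congr (_, _, _); ring.
rewrite /frame -hrot_mul; congr hrot.
by case: q p => [[? ?] ?] [[? ?] ?]; rewrite /hmul /hinv /hx /hy /ht /=; congr (_, _, _); ring.
Qed.

Lemma frame_hline_base p c s : frame p a b (hline (hmul p (0, 0, c)) a b s) = (s, 0, c).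
Proof.
case: p => [[x y] t]; rewrite /frame /hline /hrot /hmul /hinv /hx /hy /ht /=.
by congr (_, _, _); [rewrite -[RHS]mulr1 -ab1 | |]; ring.
Qed.

Lemma rot_unit a' b' : a' ^+ 2 + b' ^+ 2 = 1 ->
  (a * a' + b * b') ^+ 2 + (- b * a' + a * b') ^+ 2 = 1.
Proof.
move=> ab1'; rewrite -[RHS]mulr1 -{1}ab1 -ab1'; ring.
Qed.

Lemma frame_hline_origin p s : frame p a b (hline p a b s) = (s, 0, 0).
Proof.
case: p => [[x y] t]; rewrite /frame /hline /hrot /hmul /hinv /hx /hy /ht /=.
by congr (_, _, _); [rewrite -[RHS]mulr1 -ab1 | |]; ring.
Qed.

Lemma bilipschitz_frame p {M f} : bilipschitz M f -> bilipschitz M (frame p a b \o f).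
Proof. by move=> fM v w; rewrite /= hdist_frame. Qed.

End Isometries.

Section ProjectionAlongXAxis.
Context {R : realType}.
Implicit Types (P Q q : Hpt R) (a b c s rho : R).

(* [P = (hx P, 0, 0) . (0, hy P, wproj_t P)], so [(hy P, wproj_t P)] is the component of
   [P] in the plane [{x = 0}]. *)
Definition wproj_t P := ht P - hx P * hy P / 2.

Lemma hdist_wproj_le P Q rho : 0 <= rho -> hdist P Q <= rho ->
  `|hy P - hy Q| <= rho /\
  `|wproj_t P - wproj_t Q| <= rho ^+ 2 + rho * (`|hy P| + `|hy Q|) / 2.
Proof.
move=> rho0 /(hdist_le _ _ _ rho0) [hor ver].
have dx : `|hx P - hx Q| <= rho.
  by apply: abs_le_of_sqr => //; have := sqr_ge0 (hy P - hy Q); lra.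
split; first by apply: abs_le_of_sqr => //; have := sqr_ge0 (hx P - hx Q); lra.
have -> : wproj_t P - wproj_t Q = ht_diff P Q - (hx P - hx Q) * (hy P + hy Q) / 2.
  by rewrite /wproj_t /ht_diff; ring.
have shear : `|(hx P - hx Q) * (hy P + hy Q) / 2| <= rho * (`|hy P| + `|hy Q|) / 2.
  rewrite !normrM [`|2^-1|]ger0_norm ?invr_ge0 // ler_pM2r ?invr_gt0 //.
  by apply: ler_pM; rewrite ?normr_ge0 ?ler_normD.
by have := ler_normB (ht_diff P Q) ((hx P - hx Q) * (hy P + hy Q) / 2); lra.
Qed.

Lemma hdist_wproj_shift P Q c rho (eta omega : R) : 0 <= rho -> hdist P Q <= rho ->
  `|hy Q| <= eta -> `|wproj_t Q - c| <= omega ->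
  `|hy P| <= rho + eta /\
  `|wproj_t P - c| <= omega + rho ^+ 2 + rho * (rho + 2 * eta) / 2.
Proof.
move=> rho0 PQ hyQ hwQ; have [hyPQ hwPQ] := hdist_wproj_le _ _ _ rho0 PQ.
have hyP : `|hy P| <= rho + eta.
  by have := ler_normD (hy P - hy Q) (hy Q); rewrite subrK; lra.
split => //; have := ler_normD (wproj_t P - wproj_t Q) (wproj_t Q - c).
rewrite addrA subrK => tri.
have : rho * (`|hy P| + `|hy Q|) <= rho * (rho + 2 * eta) by rewrite ler_wpM2l //; lra.
lra.
Qed.

Lemma hdist_xaxis_translate P c rho : 0 <= rho ->
  `|hy P| <= rho -> `|wproj_t P - c| <= rho ^+ 2 -> hdist P (hx P, 0, c) <= rho.
Proof.
move=> rho0 hyP hwP; apply/hdist_le; rewrite // /hx /hy /ht /= subrr expr0n add0r subr0.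
split; first by rewrite -real_normK ?num_real // ler_sqr ?nnegrE.
by move: hwP; rewrite /ht_diff /wproj_t /hx /hy /ht /=; congr (`|_| <= _); ring.
Qed.

Definition near_xaxis P rho := exists s, hdist P (s, 0, 0) <= rho.

Lemma near_xaxis_bounds P rho : 0 <= rho -> near_xaxis P rho ->
  `|hy P| <= rho /\ `|wproj_t P| <= 2 * rho ^+ 2.
Proof.
move=> rho0 [s /(hdist_wproj_le _ _ _ rho0)].
have -> : wproj_t ((s, 0, 0) : Hpt R) = 0 by rewrite /wproj_t /hx /hy /ht /=; ring.
rewrite /hy /= normr0 addr0 !subr0 => -[hyP hwP].
by split => //; nra.
Qed.

Lemma near_xaxis_hdist P Q rho rho' rho'' : near_xaxis Q rho -> hdist P Q <= rho' ->
  rho' + rho <= rho'' -> near_xaxis P rho''.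
Proof.
move=> [s hQ] hPQ le_rho; exists s; apply: le_trans (hdist_triangle P Q (s, 0, 0)) _.
by apply: le_trans le_rho; apply: lerD.
Qed.

Lemma hline_hy q a b s : hy (hline q a b s) = hy q + s * b.
Proof. by []. Qed.

Lemma hline_wproj_tB q a b s s' :
  wproj_t (hline q a b s') - wproj_t (hline q a b s) =
  - a * (s' - s) * (hy (hline q a b s) + hy (hline q a b s')) / 2.
Proof.
by case: q => [[? ?] ?]; rewrite /wproj_t /hline /hmul /hx /hy /ht /=; ring.
Qed.

Lemma hdist_hline q a b s s' : a ^+ 2 + b ^+ 2 = 1 ->
  hdist (hline q a b s) (hline q a b s') = `|s - s'|.
Proof.
move=> ab1; rewrite /hdist.
have -> : hmul (hinv (hline q a b s')) (hline q a b s) = ((s - s') * a, (s - s') * b, 0).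
  by case: q => [[? ?] ?]; rewrite /hline /hmul /hinv /hx /hy /ht /=; congr (_, _, _); ring.
rewrite /hnorm /hx /hy /ht /= normr0 sqrtr0.
have -> : ((s - s') * a) ^+ 2 + ((s - s') * b) ^+ 2 = (s - s') ^+ 2.
  by rewrite -[RHS]mulr1 -ab1; ring.
by rewrite sqrtr_sqr; apply/max_idPl.
Qed.

End ProjectionAlongXAxis.

(* A line meeting the slab [|y| <= K, |wproj_t| <= 2 K^2] at three well separated
   parameters: the variation of [y] bounds the slope [b], hence [|a| >= 1/2], and then
   the variation [- a (s' - s) (y + y') / 2] of [wproj_t] bounds the pairwise sums of
   the three [y]-values, so the middle one is small. *)
Section HorizontalLineNearXAxis.
Context {R : realType} {q : Hpt R} {a b K L : R}.
Hypothesis ab1 : a ^+ 2 + b ^+ 2 = 1.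
Implicit Types s : R.

Local Notation line := (hline q a b).

Lemma hline_slope_le s s' : `|hy (line s)| <= K -> `|hy (line s')| <= K ->
  L <= `|s - s'| -> L * `|b| <= 2 * K.
Proof.
move=> hs hs' sep.
have : `|(s - s') * b| <= 2 * K.
  have -> : (s - s') * b = hy (line s) - hy (line s') by rewrite !hline_hy; ring.
  by have := ler_normB (hy (line s)) (hy (line s')); lra.
by rewrite normrM; apply: le_trans; rewrite ler_wpM2r.
Qed.

Lemma hline_hy_sum_le s s' : 1 / 2 <= `|a| ->
  `|wproj_t (line s)| <= 2 * K ^+ 2 -> `|wproj_t (line s')| <= 2 * K ^+ 2 ->
  L <= `|s - s'| -> L * `|hy (line s) + hy (line s')| <= 16 * K ^+ 2.
Proof.
move=> a_ge hs hs' sep.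
have := ler_normB (wproj_t (line s')) (wproj_t (line s)).
rewrite hline_wproj_tB !normrM normrN [`|2^-1|]ger0_norm ?invr_ge0 // distrC => hdiff.
have := normr_ge0 (s - s'); have := normr_ge0 (hy (line s) + hy (line s')).
have := ler_wpM2r (normr_ge0 (hy (line s) + hy (line s'))) sep; nra.
Qed.

Hypotheses (K0 : 0 <= K) (L0 : 0 < L).

Lemma hline_flat s1 s2 s3 : 4 * K <= L ->
  near_xaxis (line s1) K -> near_xaxis (line s2) K -> near_xaxis (line s3) K ->
  L <= `|s1 - s2| -> L <= `|s2 - s3| -> L <= `|s1 - s3| ->
  L * `|b| <= 2 * K /\ L * `|hy (line s2)| <= 24 * K ^+ 2.
Proof.
move=> KL /(near_xaxis_bounds _ _ K0) [y1 w1] /(near_xaxis_bounds _ _ K0) [y2 w2].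
move=> /(near_xaxis_bounds _ _ K0) [y3 w3] sep12 sep23 sep13.
have slope := hline_slope_le _ _ y1 y2 sep12; split => //.
have b_le : `|b| <= 1 / 2 by rewrite -(ler_pM2l L0); lra.
have a_ge : 1 / 2 <= `|a|.
  move: ab1; rewrite -(real_normK (num_real a)) -(real_normK (num_real b)).
  by have := normr_ge0 a; have := normr_ge0 b; nra.
have := hline_hy_sum_le _ _ a_ge w1 w2 sep12; have := hline_hy_sum_le _ _ a_ge w2 w3 sep23.
have := hline_hy_sum_le _ _ a_ge w1 w3 sep13.
set x1 := hy (line s1); set x2 := hy (line s2); set x3 := hy (line s3) => h13 h23 h12.
have mid : `|x2| <= (`|x1 + x2| + `|x2 + x3| + `|x1 + x3|) / 2.
  rewrite {1}(_ : x2 = ((x1 + x2) + (x2 + x3) - (x1 + x3)) / 2); last by field.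
  rewrite normrM [`|2^-1|]ger0_norm ?invr_ge0 // ler_pM2r ?invr_gt0 //.
  by have := ler_normB (x1 + x2 + (x2 + x3)) (x1 + x3); have := ler_normD (x1 + x2) (x2 + x3); lra.
by have := ler_wpM2l (ltW L0) mid; lra.
Qed.

Lemma hline_drift s s' : `|s - s'| <= K ->
  L * `|b| <= 2 * K -> L * `|hy (line s')| <= 24 * K ^+ 2 ->
  L * `|hy (line s)| <= 26 * K ^+ 2 /\
  L * `|wproj_t (line s) - wproj_t (line s')| <= 25 * K ^+ 3.
Proof.
move=> near slope mid.
have hy_s : L * `|hy (line s)| <= 26 * K ^+ 2.
  have -> : hy (line s) = hy (line s') + (s - s') * b by rewrite !hline_hy; ring.
  have := ler_normD (hy (line s')) ((s - s') * b); rewrite normrM => tri.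
  have h1 := ler_wpM2l (ltW L0) tri.
  have h2 := ler_pM (normr_ge0 _) (mulr_ge0 (ltW L0) (normr_ge0 b)) near slope.
  lra.
split => //.
have a1 : `|a| <= 1.
  by apply: abs_le_of_sqr => //; rewrite expr1n; have := sqr_ge0 b; have := ab1; lra.
rewrite -opprB normrN hline_wproj_tB !normrM normrN [`|2^-1|]ger0_norm ?invr_ge0 //.
have slope_le : `|a| * `|s' - s| <= K by rewrite distrC -[K]mul1r ler_pM.
have sum_le : L * `|hy (line s) + hy (line s')| <= 50 * K ^+ 2.
  by have := ler_wpM2l (ltW L0) (ler_normD (hy (line s)) (hy (line s'))); lra.
have := ler_pM (mulr_ge0 (normr_ge0 a) (normr_ge0 _)) (mulr_ge0 (ltW L0) (normr_ge0 _))
  slope_le sum_le.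
by have := K0; nra.
Qed.

End HorizontalLineNearXAxis.

Section ParabolicDistance.
Context {R : realType}.
Implicit Types (y t rho : R).

Lemma dpar_le y t y' t' rho : 0 <= rho ->
  (dpar (y, t) (y', t') <= rho) <-> (`|y - y'| <= rho /\ `|t - t'| <= rho ^+ 2).
Proof. by move=> rho0; rewrite /dpar ge_max sqrtr_le_sqr //; split => [/andP|[-> ->]]. Qed.

Lemma dpar_horiz y y' t : dpar (y, t) (y', t) = `|y - y'|.
Proof. by rewrite /dpar /= subrr normr0 sqrtr0; apply/max_idPl. Qed.

End ParabolicDistance.

Section FlatSlice.
Context {R : realType} {g : Wpt R -> Hpt R} {M r C D y0 t0 t : R} {q : Hpt R} {a b : R}.
Hypotheses (gM : bilipschitz M g) (M1 : 1 <= M) (r0 : 0 < r) (D0 : 0 <= D).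
Hypotheses (DM : 2 * D <= M * r) (CD : 4 * M * D <= C * r) (CM : 16 * M ^+ 2 <= C).
Hypotheses (tt0 : `|t - t0| <= r ^+ 2) (ab1 : a ^+ 2 + b ^+ 2 = 1).
Hypothesis axis : forall y, `|y - y0| <= C * r -> near_xaxis (g (y, t0)) D.
Hypothesis line :
  forall y, `|y - y0| <= C * r -> exists s, hdist (g (y, t)) (hline q a b s) <= D.

(* [g] is [f] seen in a frame where the line fitting the slice [t0] is the x-axis, and
   [hline q a b] fits the slice [t]. Points of that line near the slice lie within [K] of
   the x-axis, and those near [g (y, t)], [g (y', t)] with [|y - y'| >= C r] have
   parameters at least [L] apart. *)
Local Notation K := (2 * M * r).
Local Notation L := (C * r / (2 * M)).

Lemma M_gt0 : 0 < M. Proof. exact: lt_le_trans ltr01 M1. Qed.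

Lemma slice_hdist_le y y' : hdist (g (y, t)) (g (y', t)) <= M * `|y - y'|.
Proof. by have /andP[_] := gM (y, t) (y', t); rewrite dpar_horiz. Qed.

Lemma slice_hdist_ge y y' : `|y - y'| <= M * hdist (g (y, t)) (g (y', t)).
Proof.
by have /andP[+ _] := gM (y, t) (y', t); rewrite dpar_horiz ler_pdivrMl ?M_gt0.
Qed.

Lemma hdist_slices y : hdist (g (y, t)) (g (y, t0)) <= M * r.
Proof.
have /andP[_ /le_trans-> //] := gM (y, t) (y, t0).
rewrite ler_pM2l ?M_gt0 //; apply/dpar_le; first exact: ltW.
by rewrite subrr normr0 ltW.
Qed.

Lemma line_near_xaxis y s : `|y - y0| <= C * r ->
  hdist (g (y, t)) (hline q a b s) <= D -> near_xaxis (hline q a b s) K.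
Proof.
move=> yI close; apply: (near_xaxis_hdist _ _ _ (D + M * r) _ (axis _ yI)).
  by apply: le_trans (hdist_triangle _ (g (y, t)) _) _; rewrite hdist_sym lerD ?hdist_slices.
by have := DM; lra.
Qed.

Lemma line_params_sep y y' s s' : C * r <= `|y - y'| ->
  hdist (g (y, t)) (hline q a b s) <= D -> hdist (g (y', t)) (hline q a b s') <= D ->
  L <= `|s - s'|.
Proof.
move=> far close close'.
have : hdist (g (y, t)) (g (y', t)) <= D + (`|s - s'| + D).
  rewrite -(hdist_hline q a b s s' ab1).
  apply: le_trans (hdist_triangle _ (hline q a b s) _) _; rewrite lerD //.
  by apply: le_trans (hdist_triangle _ (hline q a b s') _) _; rewrite lerD // hdist_sym.
move=> /(ler_wpM2l (ltW M_gt0)) /(le_trans (slice_hdist_ge y y')) /(le_trans far) far'.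
by rewrite ler_pdivrMr ?mulr_gt0 ?M_gt0 //; have := CD; have := M_gt0; nra.
Qed.

Lemma C_ge1 : 1 <= C.
Proof. by apply: le_trans CM; have := M1; nra. Qed.

Lemma K_ge0 : 0 <= K.
Proof. by rewrite !mulr_ge0 ?ltW ?M_gt0. Qed.

Lemma L_gt0 : 0 < L.
Proof. by rewrite divr_gt0 ?mulr_gt0 ?M_gt0 // (lt_le_trans ltr01 C_ge1). Qed.

Lemma K_le_L : 4 * K <= L.
Proof.
rewrite ler_pdivlMr ?mulr_gt0 ?M_gt0 //.
by have := ler_wpM2r (ltW r0) CM; rewrite expr2; lra.
Qed.

Lemma slice_line_flat : exists s0, [/\ hdist (g (y0, t)) (hline q a b s0) <= D,
  L * `|b| <= 2 * K & L * `|hy (hline q a b s0)| <= 24 * K ^+ 2].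
Proof.
have Cr0 : 0 <= C * r by have := C_ge1; have := r0; nra.
have left : `|y0 - C * r - y0| <= C * r by rewrite addrAC subrr sub0r normrN ger0_norm.
have center : `|y0 - y0| <= C * r by rewrite subrr normr0.
have right : `|y0 + C * r - y0| <= C * r by rewrite addrAC subrr add0r ger0_norm.
have [[sl hl] [s0 h0] [sr hr]] := And3 (line _ left) (line _ center) (line _ right).
suff [slope mid] : L * `|b| <= 2 * K /\ L * `|hy (hline q a b s0)| <= 24 * K ^+ 2.
  by exists s0.
apply: (hline_flat ab1 K_ge0 L_gt0 sl s0 sr K_le_L (line_near_xaxis _ _ left hl)
  (line_near_xaxis _ _ center h0) (line_near_xaxis _ _ right hr)
  (line_params_sep _ _ _ _ _ hl h0) (line_params_sep _ _ _ _ _ h0 hr)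
  (line_params_sep _ _ _ _ _ hl hr)).
- by rewrite addrAC subrr sub0r normrN ger0_norm.
- by rewrite opprD addrA subrr sub0r normrN ger0_norm.
- by rewrite opprD addrACA subrr add0r -opprD normrN ger0_norm; have := Cr0; lra.
Qed.

Lemma slice_flat : exists c, forall y, `|y - y0| <= r ->
  `|hy (g (y, t))| <= D + 26 * K ^+ 2 / L /\
  `|wproj_t (g (y, t)) - c| <=
    25 * K ^+ 3 / L + D ^+ 2 + D * (D + 2 * (26 * K ^+ 2 / L)) / 2.
Proof.
have [s0 [h0 slope mid]] := slice_line_flat.
exists (wproj_t (hline q a b s0)) => y near_y0.
have [s hs] := line y (le_trans near_y0 (ler_peMl (ltW r0) C_ge1)).
have near : `|s - s0| <= K.
  rewrite -(hdist_hline q a b s s0 ab1).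
  apply: le_trans (hdist_triangle _ (g (y, t)) _) _; rewrite hdist_sym.
  apply: le_trans (lerD (lexx _) (hdist_triangle _ (g (y0, t)) _)) _.
  have := slice_hdist_le y y0; have := ler_wpM2l (ltW M_gt0) near_y0.
  by have := DM; lra.
have [hy_s hw_s] := hline_drift ab1 K_ge0 L_gt0 s s0 near slope mid.
by apply: hdist_wproj_shift hs _ _; rewrite ?ler_pdivlMr ?L_gt0 // mulrC.
Qed.

End FlatSlice.

Section RulerAndBetaCoefficients.
Context {R : realType}.
Local Open Scope classical_set_scope.
Implicit Types (f : Wpt R -> Hpt R) (w : Wpt R) (P p : Hpt R) (L : set (Hpt R)).

Lemma horiz_line_unit L : horiz_line_H L ->
  exists p a b, a ^+ 2 + b ^+ 2 = 1 /\ L = [set P | exists s, P = hline p a b s].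
Proof.
case=> p [a [b [ab0 ->]]].
have n2_gt0 : 0 < a ^+ 2 + b ^+ 2.
  rewrite lt_neqAle addr_ge0 ?sqr_ge0 // andbT eq_sym paddr_eq0 ?sqr_ge0 // !sqrf_eq0.
  by apply: contra ab0 => /andP[/eqP-> /eqP->].
set n := Num.sqrt (a ^+ 2 + b ^+ 2); have n_gt0 : 0 < n by rewrite sqrtr_gt0.
have nn : n ^+ 2 = a ^+ 2 + b ^+ 2 by rewrite sqr_sqrtr ?ltW.
exists p, (a / n), (b / n); split.
  by rewrite !expr_div_n -mulrDl -nn divff // gt_eqF // exprn_gt0.
apply/seteqP; split => _ [s ->].
  by exists (s * n); rewrite /hline; congr (hmul p (_, _, 0)); field; rewrite gt_eqF.
by exists (s / n); rewrite /hline; congr (hmul p (_, _, 0)); field; rewrite gt_eqF.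
Qed.

Lemma nbhd_lt_hdist {L rho D P} : L !=set0 -> nbhd L rho P -> rho < D ->
  exists2 e, L e & hdist P e < D.
Proof.
move=> [e0 Le0] PL rhoD.
have [_ [e Le <-]] := inf_lt (ex_intro _ _ (ex_intro2 _ _ e0 Le0 erefl)) (le_lt_trans PL rhoD).
by exists e.
Qed.

Lemma nbhd_of_hdist {L rho P e} : L e -> hdist P e <= rho -> nbhd L rho P.
Proof.
move=> Le Pe; apply: le_trans Pe; apply: ge_inf; last by exists e.
by exists 0 => _ [x _ <-]; exact: hdist_ge0.
Qed.

Lemma ruler_coeff_lt_lines {f w R' delta} : 0 < R' -> (ruler_coeff f w R' < delta%:E)%E ->
  forall t, exists p a b, a ^+ 2 + b ^+ 2 = 1 /\
    forall y, dpar w (y, t) <= R' -> exists s, hdist (f (y, t)) (hline p a b s) <= delta * R'.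
Proof.
move=> R'0 /ereal_inf_lt [_ [rho [_ lines] <-]]; rewrite lte_fin => rho_delta t.
have [L [/horiz_line_unit [p [a [b [ab1 ->]]]] fL]] := lines t.
exists p, a, b; split => // y yw.
have fy := fL (f (y, t)) (ex_intro2 _ _ (y, t) (conj erefl yw) erefl).
have rhoD : rho * R' < delta * R' by rewrite ltr_pM2r.
have [_ [s ->] close] := nbhd_lt_hdist (ex_intro _ _ (ex_intro _ 0 erefl)) fy rhoD.
by exists s; rewrite ltW.
Qed.

Lemma vertical_plane_through p a b : (a, b) != (0, 0) ->
  vertical_plane [set P | exists s, (hx P, hy P) = (hx p + s * a, hy p + s * b)].
Proof.
move=> ab0; exists [set z | exists s, z = (hx p + s * a, hy p + s * b)]; split.
  by exists (hx p), (hy p), a, b.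
by apply/seteqP; split => P [s e]; exists s.
Qed.

Lemma beta_coeff_le_lines {f w r p a b} (eps : R) : a ^+ 2 + b ^+ 2 = 1 -> 0 < eps ->
  (forall t, exists c, forall y, dpar w (y, t) <= r ->
     exists s, hdist (f (y, t)) (hline (hmul p (0, 0, c)) a b s) <= eps * r) ->
  (beta_coeff f w r <= eps%:E)%E.
Proof.
move=> ab1 eps0 lines.
have ab0 : (a, b) != (0, 0).
  by apply: contra_eq_neq ab1 => -[-> ->]; rewrite expr0n add0r eq_sym oner_neq0.
pose V := [set P | exists s, (hx P, hy P) = (hx p + s * a, hy p + s * b)].
apply: (@le_trans _ _ (beta_plane f V w r)).
  by apply: ereal_inf_lbound; exists V => //; apply: vertical_plane_through.
apply: ereal_inf_lbound; exists eps => //; split => // t.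
have [c close] := lines t.
exists [set P | exists s, P = hline (hmul p (0, 0, c)) a b s]; split.
  by exists (hmul p (0, 0, c)), a, b.
split=> [_ [s ->]|_ [[y t'] [tt yw] <-]].
  by exists s; rewrite /hline /hmul /hx /hy /=; congr (_, _); ring.
have tt' : t' = t := tt; subst t'; have [s fs] := close y yw.
exact: nbhd_of_hdist (ex_intro _ s erefl) fs.
Qed.

End RulerAndBetaCoefficients.

(* With this choice [26 K^2 / L = 13 eps^2 r / (250 M)] and [25 K^3 / L = (eps r)^2 / 10]
   in [slice_flat], for [D = eps r / 8]. *)
Definition ruler_scale {R : realType} (M eps : R) : R := 4000 * M ^+ 4 / eps ^+ 2.

Section RulerScale.
Context {R : realType} {M eps r : R}.
Hypotheses (M1 : 1 <= M) (eps0 : 0 < eps) (eps1 : eps <= 1) (r0 : 0 < r).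

Local Notation C := (ruler_scale M eps).
Local Notation D := (eps * r / 8).
Local Notation K := (2 * M * r).
Local Notation L := (C * r / (2 * M)).

Lemma ruler_scale_ge : 4000 * M ^+ 4 <= C.
Proof.
have M4 : 0 <= M ^+ 4 := exprn_ge0 4 (le_trans ler01 M1).
have e2 : eps ^+ 2 <= 1 by rewrite expr_le1 // ltW.
by rewrite /ruler_scale ler_pdivlMr; [nra | exact: exprn_gt0].
Qed.

Lemma M_sqr_bounds : 1 <= M ^+ 2 /\ M ^+ 2 <= M ^+ 4.
Proof.
have M2 : 1 <= M ^+ 2 by rewrite expr_ge1 ?(le_trans ler01 M1).
by split => //; rewrite -[4%N]/(2 * 2)%N exprM ler_peMl ?(le_trans ler01 M2) // expr2.
Qed.

Lemma ruler_scale_ge10 : 10 <= C.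
Proof. by have := ruler_scale_ge; have [] := M_sqr_bounds; lra. Qed.

Lemma ruler_scale_gt0 : 0 < C.
Proof. by apply: lt_le_trans ruler_scale_ge10. Qed.

Lemma ruler_scale_sqr_ge : 16 * M ^+ 2 <= C.
Proof. by have := ruler_scale_ge; have [] := M_sqr_bounds; lra. Qed.

Lemma ruler_D_le_Mr : 2 * D <= M * r.
Proof.
have : eps * r <= M * r by rewrite ler_pM2r // (le_trans eps1 M1).
by have := mulr_gt0 eps0 r0; lra.
Qed.

Lemma ruler_MD_le_Cr : 4 * M * D <= C * r.
Proof.
rewrite (_ : 4 * M * D = M * eps / 2 * r); last by field.
rewrite ler_pM2r //; have := ruler_scale_ge; have [M2 M24] := M_sqr_bounds.
have : M * eps <= M by rewrite ler_piMr // (le_trans ler01 M1).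
have : M <= M ^+ 2 by rewrite expr2 ler_peMl // (le_trans ler01 M1).
lra.
Qed.

Lemma slice_error_eta : 26 * K ^+ 2 / L <= eps * r / 16.
Proof.
have M_gt0 : 0 < M := lt_le_trans ltr01 M1.
have -> : 26 * K ^+ 2 / L = 13 * (eps ^+ 2 * r) / (250 * M).
  by rewrite /ruler_scale; field; rewrite !gt_eqF.
rewrite ler_pdivrMr ?mulr_gt0 //.
have e2 : eps ^+ 2 <= eps by have := eps0; have := eps1; nra.
have er0 : 0 <= eps * r by rewrite mulr_ge0 ?ltW.
by have := ler_wpM2r (ltW r0) e2; have := ler_wpM2l er0 M1; lra.
Qed.

Lemma slice_error_hy : D + 26 * K ^+ 2 / L <= eps / 2 * r.
Proof. by have := slice_error_eta; have := mulr_gt0 eps0 r0; lra. Qed.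

Lemma slice_error_wproj :
  25 * K ^+ 3 / L + D ^+ 2 + D * (D + 2 * (26 * K ^+ 2 / L)) / 2 <= (eps / 2 * r) ^+ 2.
Proof.
have -> : 25 * K ^+ 3 / L = (eps * r) ^+ 2 / 10.
  by rewrite /ruler_scale; field; rewrite !gt_eqF ?(lt_le_trans ltr01 M1).
have D0 : 0 <= D by rewrite !mulr_ge0 ?ltW.
have := ler_wpM2l D0 (lerD (lexx D) (ler_wpM2l (_ : 0 <= 2) slice_error_eta)).
rewrite -/(eps * r) => //; set x := eps * r.
rewrite (_ : eps / 2 * r = x / 2); last by rewrite /x; ring.
by have := sqr_ge0 x; lra.
Qed.

End RulerScale.

Section SliceNearVerticalPlane.
Context {R : realType} {f : Wpt R -> Hpt R} {M eps r y0 t0 : R} {p : Hpt R} {a0 b0 : R}.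
Hypotheses (fM : bilipschitz M f) (M1 : 1 <= M) (eps0 : 0 < eps) (eps1 : eps <= 1).
Hypotheses (r0 : 0 < r) (ab0 : a0 ^+ 2 + b0 ^+ 2 = 1).

Local Notation C := (ruler_scale M eps).
Local Notation D := (eps * r / 8).

Hypothesis axis : forall y, dpar (y0, t0) (y, t0) <= C * r ->
  exists s, hdist (f (y, t0)) (hline p a0 b0 s) <= D.
Hypothesis lines : forall t, exists q a b, a ^+ 2 + b ^+ 2 = 1 /\
  forall y, dpar (y0, t0) (y, t) <= C * r -> exists s, hdist (f (y, t)) (hline q a b s) <= D.

Lemma dpar_center_le y t : `|y - y0| <= C * r -> `|t - t0| <= r ^+ 2 ->
  dpar (y0, t0) (y, t) <= C * r.
Proof.
have C1 : 1 <= C by have := ruler_scale_ge10 M1 eps0 eps1; lra.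
move=> yI tI; have Cr0 : 0 <= C * r := mulr_ge0 (le_trans ler01 C1) (ltW r0).
apply/dpar_le => //; rewrite distrC (distrC t0); split => //; apply: le_trans tI _.
by rewrite ler_sqr ?nnegrE ?(ltW r0) //; exact: ler_peMl (ltW r0) C1.
Qed.

Lemma slice_near_vplane_line t : exists c, forall y, dpar (y0, t0) (y, t) <= r ->
  exists s, hdist (f (y, t)) (hline (hmul p (0, 0, c)) a0 b0 s) <= eps / 2 * r.
Proof.
have [tt0 | far] := leP `|t - t0| (r ^+ 2); last first.
  by exists 0 => y /(dpar_le _ _ _ _ _ (ltW r0)) [_]; rewrite distrC leNgt far.
have [q [a [b [ab1 line]]]] := lines t.
pose g := frame p a0 b0 \o f.
have g_axis y : `|y - y0| <= C * r -> near_xaxis (g (y, t0)) D.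
  move=> yI; have [|s fs] := axis y; first by rewrite dpar_center_le // subrr normr0 sqr_ge0.
  by exists s; rewrite -(frame_hline_origin ab0 p s) hdist_frame.
have g_line y : `|y - y0| <= C * r -> exists s,
    hdist (g (y, t)) (hline (frame p a0 b0 q) (a0 * a + b0 * b) (- b0 * a + a0 * b) s) <= D.
  move=> yI; have [s fs] := line y (dpar_center_le _ _ yI tt0).
  by exists s; rewrite -frame_hline // hdist_frame.
have D0 : 0 <= D by have := mulr_gt0 eps0 r0; lra.
have [c flat] := slice_flat (bilipschitz_frame ab0 p fM) M1 r0 D0 (ruler_D_le_Mr M1 eps0 eps1 r0)
  (ruler_MD_le_Cr M1 eps0 eps1 r0) (ruler_scale_sqr_ge M1 eps0 eps1) tt0 (rot_unit ab0 _ _ ab1)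
  g_axis g_line.
exists c => y /(dpar_le _ _ _ _ _ (ltW r0)) [+ _]; rewrite distrC => /flat [hy_le hw_le].
exists (hx (g (y, t))); rewrite -(hdist_frame ab0 p) frame_hline_base //.
apply: hdist_xaxis_translate; first by have := mulr_gt0 eps0 r0; lra.
  exact: le_trans hy_le (slice_error_hy M1 eps0 eps1 r0).
exact: le_trans hw_le (slice_error_wproj M1 eps0 eps1 r0).
Qed.

End SliceNearVerticalPlane.

Theorem proposition4p6 (R : realType) (M : R) (hM : 1 <= M) :
  forall eps : R, 0 < eps <= 1 ->
  exists C : R, 10 <= C /\
  exists delta : R, 0 < delta /\
  forall f : Wpt R -> Hpt R, bilipschitz M f ->
  forall (w : Wpt R) (r : R), 0 < r ->
    (ruler_coeff f w (C * r) < delta%:E)%E ->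
    (beta_coeff f w r < eps%:E)%E.
Proof.
move=> eps /andP[eps0 eps1]; have C0 := ruler_scale_gt0 hM eps0 eps1.
exists (ruler_scale M eps); split; first exact: ruler_scale_ge10.
have C8 : 0 < 8 * ruler_scale M eps by lra.
exists (eps / (8 * ruler_scale M eps)); split; first exact: divr_gt0.
move=> f fM [y0 t0] r r0 /(ruler_coeff_lt_lines (mulr_gt0 C0 r0)).
rewrite (_ : _ * (_ * r) = eps * r / 8); last by field; exact: lt0r_neq0.
move=> lines; have [p [a0 [b0 [ab0 axis]]]] := lines t0.
apply: (le_lt_trans (beta_coeff_le_lines (eps / 2) ab0 _ _)).
- by rewrite divr_gt0.
- exact: slice_near_vplane_line fM hM eps0 eps1 r0 ab0 axis lines.
- by rewrite lte_fin; lra.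
Qed.
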